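(* Let $L=\mathbb{C}(x_1,y_1,z_1,x_2,y_2,z_2)$ with $\mathbb{Z}/3\mathbb{Z}$ acting by simultaneous cyclic permutation of $(x_1,y_1,z_1)$ and $(x_2,y_2,z_2)$. The subfield of $L$ generated by $F_1(x_1,y_1,z_1),F_2(x_1,y_1,z_1),F_3(x_1,y_1,z_1)$, $F_1(x_2,y_2,z_2)$, $G_1(x_1,y_1,z_1,x_2,y_2,z_2)$, and $G_2(x_1,y_1,z_1,x_2,y_2,z_2)$ equals $K=\mathbb{C}(a_1,a_2,b_1^3,b_1c_1,b_1c_2,c_1b_2)$, and $K=L^{\mathbb{Z}/3\mathbb{Z}}$. In other words, every $\mathbb{Z}/3\mathbb{Z}$-invariant rational function of these six variables is a rational function of these six functions.
   Context: Let $\zeta=e^{2\pi i/3}$ and for $\ell=1,2$ set $a_\ell=x_\ell+y_\ell+z_\ell$, $b_\ell=x_\ell+\zeta y_\ell+\zeta^2 z_\ell$, $c_\ell=x_\ell+\zeta^2 y_\ell+\zeta z_\ell$. For a triple $(x,y,z)$ with corresponding $a,b,c$, $F_1=a$, $F_2=\frac{b^2}{c}+\frac{c^2}{b}$, $F_3=\frac{1}{i}\left(\frac{b^2}{c}-\frac{c^2}{b}\right)$. $G_1$ and $G_2$ are the real and imaginary parts of $b_1c_2$. The generator of $\mathbb{Z}/3\mathbb{Z}$ multiplies $b_1,b_2$ by $\zeta$ and $c_1,c_2$ by $\zeta^2$. *)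

From HB Require Import structures.
From mathcomp Require Import all_boot all_order all_algebra.
From mathcomp Require Import fraction.
From mathcomp.multinomials Require Import mpoly.
From mathcomp.real_closed Require Import complex.

Set Implicit Arguments.
Unset Strict Implicit.
Unset Printing Implicit Defensive.

Import Order.TTheory GRing.Theory Num.Theory.
Local Open Scope ring_scope.
Local Open Scope complex_scope.

Section Defs.
Variable R : rcfType.

Definition Cx := R[i].

Definition P6 := {mpoly Cx[6]}.
Definition L6 := {fraction P6}.

Definition tofL (p : P6) : L6 := @FracField.tofrac P6 p.
Definition cstL (c : Cx) : L6 := tofL (c%:MP_[6]).

Definition var (i : 'I_6) : L6 := tofL 'X_i.
Definition x1 : L6 := var (@Ordinal 6 0 isT).
Definition y1 : L6 := var (@Ordinal 6 1 isT).
Definition z1 : L6 := var (@Ordinal 6 2 isT).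
Definition x2 : L6 := var (@Ordinal 6 3 isT).
Definition y2 : L6 := var (@Ordinal 6 4 isT).
Definition z2 : L6 := var (@Ordinal 6 5 isT).

(* zeta = e^{2 pi i/3} = -1/2 + i sqrt(3)/2, and the imaginary unit. *)
Definition zeta : Cx := (- (1 / 2%:R)) +i* (Num.sqrt 3%:R / 2%:R).
Definition iC : Cx := 'i.

Definition aF (x y z : L6) : L6 := x + y + z.
Definition bF (x y z : L6) : L6 := x + cstL zeta * y + cstL (zeta ^+ 2) * z.
Definition cF (x y z : L6) : L6 := x + cstL (zeta ^+ 2) * y + cstL zeta * z.

Definition a1 := aF x1 y1 z1.  Definition b1 := bF x1 y1 z1.
Definition c1 := cF x1 y1 z1.  Definition a2 := aF x2 y2 z2.
Definition b2 := bF x2 y2 z2.  Definition c2 := cF x2 y2 z2.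

Definition F1 (x y z : L6) : L6 := aF x y z.
Definition F2 (x y z : L6) : L6 :=
  (bF x y z) ^+ 2 / cF x y z + (cF x y z) ^+ 2 / bF x y z.
Definition F3 (x y z : L6) : L6 :=
  (cstL iC)^-1 * ((bF x y z) ^+ 2 / cF x y z - (cF x y z) ^+ 2 / bF x y z).

(* G_1, G_2 = formal real and imaginary parts of b1*c2 (variables real,
   so that the conjugate of b1*c2 is c1*b2). *)
Definition G1 : L6 := (b1 * c2 + c1 * b2) / 2%:R.
Definition G2 : L6 := (b1 * c2 - c1 * b2) / (cstL (2%:R * iC)).

Definition evalL (g : 'I_6 -> L6) (p : P6) : L6 := mmap cstL g p.
Definition gen_subfield (g : 'I_6 -> L6) (f : L6) : Prop :=
  exists p q : P6, evalL g q != 0 /\ f = evalL g p / evalL g q.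

(* The Z/3Z action: generator sigma cycles x1->y1->z1->x1 and x2->y2->z2->x2
   simultaneously, i.e. the permutation of variable indices below. *)
Definition sigma_idx (i : 'I_6) : 'I_6 :=
  match val i with
  | 0 => @Ordinal 6 1 isT | 1 => @Ordinal 6 2 isT | 2 => @Ordinal 6 0 isT
  | 3 => @Ordinal 6 4 isT | 4 => @Ordinal 6 5 isT | _ => @Ordinal 6 3 isT
  end.
Definition sigmaP (p : P6) : P6 := mmap (@mpolyC 6 Cx) (fun i => 'X_(sigma_idx i)) p.
Definition z3_invariant (f : L6) : Prop :=
  exists p q : P6, q != 0 /\ f = tofL p / tofL q /\
                   tofL (sigmaP p) / tofL (sigmaP q) = f.

Definition gensF (i : 'I_6) : L6 :=
  match val i with
  | 0 => F1 x1 y1 z1 | 1 => F2 x1 y1 z1 | 2 => F3 x1 y1 z1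
  | 3 => F1 x2 y2 z2 | 4 => G1 | _ => G2
  end.
Definition gensK (i : 'I_6) : L6 :=
  match val i with
  | 0 => a1 | 1 => a2 | 2 => b1 ^+ 3 | 3 => b1 * c1 | 4 => b1 * c2 | _ => c1 * b2
  end.
End Defs.

From HB Require Import structures.
From mathcomp Require Import all_boot all_order all_algebra.
From mathcomp Require Import fraction.
From mathcomp.multinomials Require Import mpoly.
From mathcomp.real_closed Require Import complex.
From mathcomp Require Import ring.

Set Implicit Arguments.
Unset Strict Implicit.
Unset Printing Implicit Defensive.

Import Order.TTheory GRing.Theory Num.Theory.
Local Open Scope ring_scope.

(* Write b = b_1, c = c_1 and K = C(a_1, a_2, b^3, bc, b_1 c_2, c_1 b_2).  The F_i, G_i
   and the generators of K are rational in each other: b^2/c = b^3/(bc) and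
   c^2/b = (bc)^2/b^3, while b^2/c, c^2/b, b_1 c_2 and c_1 b_2 are half sums and half
   differences of F_2, i F_3, G_1 and i G_2.  Since sigma scales b_l by w^2 and c_l by
   w, K is invariant.  Conversely, every polynomial p can be written
   p = s0 + s1 b + s2 c with s0, s1, s2 in K in such a way that
   sigma^k p = s0 + s1 w^(2k) b + s2 w^k c: for the variables this is the inverse
   discrete Fourier transform, and the shape survives products because
   b^2 = (b^3/(bc)) c and c^2 = ((bc)^2/b^3) b.  Averaging over the orbit puts the
   invariant polynomials in K, and an invariant fraction p/q is the quotient of the
   invariant polynomials p sigma(q) sigma^2(q) and q sigma(q) sigma^2(q). *)

Lemma mpoly_ring_ind (n : nat) (R : ringType) (P : {mpoly R[n]} -> Prop) :
  (forall c, P c%:MP) -> (forall i, P 'X_i) ->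
  (forall p q, P p -> P q -> P (p + q)) ->
  (forall p q, P p -> P q -> P (p * q)) -> forall p, P p.
Proof.
move=> PC PX PD PM; elim/mpolyind => [|c m p _ _ Pp]; first by rewrite -mpolyC0.
apply: (PD) => //; rewrite -mul_mpolyC; apply: (PM) => //.
rewrite mpolyXE_id; apply: (big_ind P); [by rewrite -mpolyC1 | exact: PM | move=> i _].
elim: (m i) => [|k IHk]; first by rewrite expr0 -mpolyC1.
by rewrite exprS; apply: PM.
Qed.

Lemma mpoly_rmorph_ext (n : nat) (R S : ringType) (f g : {rmorphism {mpoly R[n]} -> S}) :
  (forall c, f c%:MP = g c%:MP) -> (forall i, f 'X_i = g 'X_i) -> f =1 g.
Proof.
move=> fgC fgX; elim/mpoly_ring_ind => [c|i|p q IHp IHq|p q IHp IHq] //.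
- by rewrite !rmorphD IHp IHq.
- by rewrite !rmorphM IHp IHq.
Qed.

Lemma subf_div (F : fieldType) (x1 y1 x2 y2 : F) : y1 != 0 -> y2 != 0 ->
  x1 / y1 - x2 / y2 = (x1 * y2 - x2 * y1) / (y1 * y2).
Proof. by move=> y1_neq0 y2_neq0; rewrite -mulNr addf_div // mulNr. Qed.

Section SquareQuotients.
Variable F : fieldType.
Implicit Types b c : F.

Lemma sqr_divl_cube b c : b != 0 -> c != 0 -> b ^+ 2 / c = b ^+ 3 / (b * c).
Proof. by move=> b_neq0 c_neq0; field; rewrite b_neq0 c_neq0. Qed.

Lemma sqr_divr_cube b c : b != 0 -> c ^+ 2 / b = (b * c) ^+ 2 / b ^+ 3.
Proof. by move=> b_neq0; field; rewrite b_neq0. Qed.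

Lemma cube_sqr_div b c : b != 0 -> c != 0 -> b ^+ 3 = (b ^+ 2 / c) ^+ 2 * (c ^+ 2 / b).
Proof. by move=> b_neq0 c_neq0; field; rewrite b_neq0 c_neq0. Qed.

Lemma mul_sqr_div b c : b != 0 -> c != 0 -> b * c = (b ^+ 2 / c) * (c ^+ 2 / b).
Proof. by move=> b_neq0 c_neq0; field; rewrite b_neq0 c_neq0. Qed.

End SquareQuotients.

Section CubeRoots.
Variables (T : comRingType) (w : T).

Lemma cube_eq1 : 1 + w + w ^+ 2 = 0 -> w ^+ 3 = 1.
Proof.
move=> w_root; apply/eqP; rewrite -subr_eq0.
have -> : w ^+ 3 - 1 = (w - 1) * (1 + w + w ^+ 2) by ring.
by rewrite w_root mulr0.
Qed.

Lemma rot_dft_b (x y z : T) : w ^+ 3 = 1 ->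
  y + w * z + w ^+ 2 * x = w ^+ 2 * (x + w * y + w ^+ 2 * z).
Proof.
move=> w3; transitivity (w ^+ 2 * x + w ^+ 3 * y + w ^+ 3 * (w * z)); last by ring.
by rewrite w3; ring.
Qed.

Lemma rot_dft_c (x y z : T) : w ^+ 3 = 1 ->
  y + w ^+ 2 * z + w * x = w * (x + w ^+ 2 * y + w * z).
Proof.
move=> w3; transitivity (w * x + w ^+ 3 * y + w ^+ 2 * z); last by ring.
by rewrite w3; ring.
Qed.

Lemma unity3_mul_sqr_l (x y : T) : w ^+ 3 = 1 -> w ^+ 2 * x * (w * y) = x * y.
Proof. by move=> w3; rewrite mulrACA -exprSr w3 mul1r. Qed.

Lemma unity3_mul_sqr_r (x y : T) : w ^+ 3 = 1 -> w * x * (w ^+ 2 * y) = x * y.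
Proof. by move=> w3; rewrite mulrACA -exprS w3 mul1r. Qed.

Lemma unity3_sqr_expr3 (x : T) : w ^+ 3 = 1 -> (w ^+ 2 * x) ^+ 3 = x ^+ 3.
Proof. by move=> w3; rewrite exprMn exprAC w3 expr1n mul1r. Qed.

End CubeRoots.

Record subfield_closed (F : fieldType) (S : F -> Prop) : Prop := SubfieldClosed {
  subfield1 : S 1;
  subfieldB : forall x y, S x -> S y -> S (x - y);
  subfieldM : forall x y, S x -> S y -> S (x * y);
  subfieldV : forall x, S x -> S x^-1 }.

Section SubfieldClosedTheory.
Variables (F : fieldType) (S : F -> Prop).
Hypothesis S_closed : subfield_closed S.

Lemma subfield0 : S 0.
Proof. by rewrite -(subrr 1); apply: (subfieldB S_closed); apply: (subfield1 S_closed). Qed.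

Lemma subfieldN x : S x -> S (- x).
Proof. by move=> Sx; rewrite -sub0r; apply: (subfieldB S_closed) => //; apply: subfield0. Qed.

Lemma subfieldD x y : S x -> S y -> S (x + y).
Proof. by move=> Sx Sy; rewrite -[y]opprK; apply: (subfieldB S_closed) => //; apply: subfieldN. Qed.

Lemma subfield_div x y : S x -> S y -> S (x / y).
Proof. by move=> Sx Sy; apply: (subfieldM S_closed) => //; apply: (subfieldV S_closed). Qed.

Lemma subfieldX x n : S x -> S (x ^+ n).
Proof.
move=> Sx; elim: n => [|n IHn]; first by rewrite expr0; apply: (subfield1 S_closed).
by rewrite exprS; apply: (subfieldM S_closed).
Qed.

Lemma subfield_nat n : S n%:R.
Proof.
elim: n => [|n IHn]; first exact: subfield0.
by rewrite -addn1 natrD; apply: subfieldD => //; apply: (subfield1 S_closed).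
Qed.

Lemma subfield_sum_diff (x y d : F) : (2%:R : F) != 0 -> d != 0 ->
  S (x + y) -> S ((x - y) / d) -> S d -> S x /\ S y.
Proof.
move=> two_neq0 d_neq0 Ss Sq Sd; have S2 := subfield_nat 2.
have Sdq : S (d * ((x - y) / d)) by apply: (subfieldM S_closed).
split.
- have -> : x = (x + y + d * ((x - y) / d)) / 2%:R by field; rewrite two_neq0 d_neq0.
  by apply: subfield_div => //; apply: subfieldD.
- have -> : y = (x + y - d * ((x - y) / d)) / 2%:R by field; rewrite two_neq0 d_neq0.
  by apply: subfield_div => //; apply: (subfieldB S_closed).
Qed.

End SubfieldClosedTheory.

Ltac subfield_closure S_closed := repeat first
  [ assumption
  | apply: (subfield_nat S_closed)
  | apply: (subfieldD S_closed) | apply: (subfieldB S_closed) | apply: (subfieldN S_closed)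
  | apply: (subfieldM S_closed) | apply: (subfieldV S_closed) | apply: (subfieldX S_closed) ].

Section TwistedTriples.
Variables (F : fieldType) (S : F -> Prop) (w b c : F).
Hypotheses (S_closed : subfield_closed S) (Sw : S w) (w_root : 1 + w + w ^+ 2 = 0).
Hypotheses (b_neq0 : b != 0) (c_neq0 : c != 0) (Sb3 : S (b ^+ 3)) (Sbc : S (b * c)).

Let w3 : w ^+ 3 = 1 := cube_eq1 w_root.

Definition twist (s0 s1 s2 u : F) : F := s0 + s1 * (u ^+ 2 * b) + s2 * (u * c).

(* [(x, y, z)] models [(f, sigma f, sigma^2 f)] for [f = s0 + s1 b + s2 c], where
   [sigma] fixes [S] and scales [b] by [w^2] and [c] by [w]. *)
Definition twisted_triple (x y z : F) : Prop := exists s0 s1 s2,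
  [/\ S s0, S s1, S s2 & [/\ x = twist s0 s1 s2 1, y = twist s0 s1 s2 w &
                             z = twist s0 s1 s2 (w ^+ 2)]].

Lemma twistD s0 s1 s2 t0 t1 t2 u :
  twist s0 s1 s2 u + twist t0 t1 t2 u = twist (s0 + t0) (s1 + t1) (s2 + t2) u.
Proof. by rewrite /twist; ring. Qed.

Lemma twistM s0 s1 s2 t0 t1 t2 u : u ^+ 3 = 1 ->
  twist s0 s1 s2 u * twist t0 t1 t2 u =
  twist (s0 * t0 + (s1 * t2 + s2 * t1) * (b * c))
        (s0 * t1 + s1 * t0 + s2 * t2 * ((b * c) ^+ 2 / b ^+ 3))
        (s0 * t2 + s2 * t0 + s1 * t1 * (b ^+ 3 / (b * c))) u.
Proof.
move=> u3; rewrite [LHS](_ : _ = twist (s0 * t0 + (s1 * t2 + s2 * t1) * (b * c))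
        (s0 * t1 + s1 * t0 + s2 * t2 * ((b * c) ^+ 2 / b ^+ 3))
        (s0 * t2 + s2 * t0 + s1 * t1 * (b ^+ 3 / (b * c))) u
      + (u ^+ 3 - 1) * ((s1 * t2 + s2 * t1) * (b * c) + s1 * t1 * u * b ^+ 2)).
  by rewrite u3 subrr mul0r addr0.
by rewrite /twist; field; rewrite b_neq0 c_neq0.
Qed.

Lemma twist_rot s0 s1 s2 u :
  twist s0 (s1 * w ^+ 2) (s2 * w) u = twist s0 s1 s2 (w * u).
Proof. by rewrite /twist; ring. Qed.

Lemma twist_sum s0 s1 s2 :
  twist s0 s1 s2 1 + twist s0 s1 s2 w + twist s0 s1 s2 (w ^+ 2) = 3%:R * s0.
Proof.
rewrite [LHS](_ : _ = 3%:R * s0 + (1 + w + w ^+ 2) * (s1 * (1 - w + w ^+ 2) * b + s2 * c)).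
  by rewrite w_root mul0r addr0.
by rewrite /twist; ring.
Qed.

Lemma triple_cst s : S s -> twisted_triple s s s.
Proof.
move=> Ss; have S0 := subfield0 S_closed.
by exists s, 0, 0; split=> //; split; rewrite /twist !mul0r !addr0.
Qed.

Lemma triple_add x y z x' y' z' : twisted_triple x y z -> twisted_triple x' y' z' ->
  twisted_triple (x + x') (y + y') (z + z').
Proof.
move=> [s0 [s1 [s2 [S0 S1 S2 [-> -> ->]]]]] [t0 [t1 [t2 [T0 T1 T2 [-> -> ->]]]]].
exists (s0 + t0), (s1 + t1), (s2 + t2); split; try exact: subfieldD.
by split; apply: twistD.
Qed.

Lemma triple_mul x y z x' y' z' : twisted_triple x y z -> twisted_triple x' y' z' ->
  twisted_triple (x * x') (y * y') (z * z').
Proof.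
move=> [s0 [s1 [s2 [S0 S1 S2 [-> -> ->]]]]] [t0 [t1 [t2 [T0 T1 T2 [-> -> ->]]]]].
eexists _, _, _; split; last split; try apply: twistM.
all: try by subfield_closure S_closed.
- exact: expr1n.
- by rewrite exprAC w3 expr1n.
Qed.

Lemma triple_rot x y z : twisted_triple x y z -> twisted_triple y z x.
Proof.
move=> [s0 [s1 [s2 [S0 S1 S2 [-> -> ->]]]]].
exists s0, (s1 * w ^+ 2), (s2 * w); split; try by subfield_closure S_closed.
by split; rewrite twist_rot ?mulr1 -?expr2 -?exprS ?w3.
Qed.

Lemma triple_fixed x : (3%:R : F) != 0 -> twisted_triple x x x -> S x.
Proof.
move=> three_neq0 [s0 [s1 [s2 [S0 _ _ [ex ey ez]]]]].
suff -> : x = s0 by [].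
by apply: (mulfI three_neq0); rewrite -(twist_sum s0 s1 s2) -ex -ey -ez; ring.
Qed.

(* Inverse discrete Fourier transform: with [a = x + y + z], [B = x + w y + w^2 z] and
   [C = x + w^2 y + w z], one has [3 x = a + B + C], [3 y = a + w^2 B + w C] and
   [3 z = a + w B + w^2 C]. *)
Lemma triple_dft x y z : (3%:R : F) != 0 ->
  S (x + y + z) -> S ((x + w * y + w ^+ 2 * z) / b) -> S ((x + w ^+ 2 * y + w * z) / c) ->
  twisted_triple x y z.
Proof.
move=> three_neq0 Sa SB SC.
have S3 : S (3%:R^-1) by subfield_closure S_closed.
exists ((x + y + z) / 3%:R), (3%:R^-1 * ((x + w * y + w ^+ 2 * z) / b)),
       (3%:R^-1 * ((x + w ^+ 2 * y + w * z) / c)).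
split; try by subfield_closure S_closed.
split; apply: (mulfI three_neq0); rewrite /twist.
- rewrite [RHS](_ : _ = 3%:R * x + (1 + w + w ^+ 2) * (y + z)).
    by rewrite w_root mul0r addr0.
  by field; rewrite three_neq0 b_neq0 c_neq0.
- rewrite [RHS](_ : _ = 3%:R * y +
    (1 + w + w ^+ 2) * (x + 2%:R * (w - 1) * y + (1 - w + w ^+ 2) * z)).
    by rewrite w_root mul0r addr0.
  by field; rewrite three_neq0 b_neq0 c_neq0.
- rewrite [RHS](_ : _ = 3%:R * z + (1 + w + w ^+ 2) *
    ((1 - w + w ^+ 2) * x + (w ^+ 3 - w + 1) * y + (w - 1) * (w ^+ 3 + 2%:R) * z)).
    by rewrite w_root mul0r addr0.
  by field; rewrite three_neq0 b_neq0 c_neq0.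
Qed.

Lemma triple_rmorph (n : nat) (R : ringType) (f0 f1 f2 : {rmorphism {mpoly R[n]} -> F}) :
  (forall a, twisted_triple (f0 a%:MP) (f1 a%:MP) (f2 a%:MP)) ->
  (forall i, twisted_triple (f0 'X_i) (f1 'X_i) (f2 'X_i)) ->
  forall p, twisted_triple (f0 p) (f1 p) (f2 p).
Proof.
move=> tC tX; elim/mpoly_ring_ind => [a|i|p q tp tq|p q tp tq].
- exact: tC.
- exact: tX.
- by rewrite !rmorphD; apply: triple_add.
- by rewrite !rmorphM; apply: triple_mul.
Qed.

End TwistedTriples.

Section InvariantFractions.
Variables (A : idomainType) (F : fieldType).
Variables (phi : {rmorphism A -> F}) (sigma : {rmorphism A -> A}).
Hypotheses (phi_inj : injective phi) (sigma3 : forall p, sigma (sigma (sigma p)) = p).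

Definition invariant_frac (f : F) : Prop := exists p q,
  q != 0 /\ f = phi p / phi q /\ phi (sigma p) / phi (sigma q) = f.

Lemma phi_neq0 q : q != 0 -> phi q != 0.
Proof. by rewrite raddf_eq0. Qed.

Lemma sigma_neq0 q : q != 0 -> sigma q != 0.
Proof. by move=> q_neq0; apply: contraNneq q_neq0 => sq0; rewrite -[q]sigma3 sq0 !rmorph0. Qed.

Lemma fixed_invariant_frac p : sigma p = p -> invariant_frac (phi p).
Proof. by move=> fix_p; exists p, 1; rewrite !rmorph1 !divr1 fix_p oner_neq0. Qed.

Lemma invariant_frac_closed : subfield_closed invariant_frac.
Proof.
split.
- by rewrite -(rmorph1 phi); apply: fixed_invariant_frac; apply: rmorph1.
- move=> _ _ [p [q [q_neq0 [-> fix_pq]]]] [p' [q' [q'_neq0 [-> fix_pq']]]].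
  exists (p * q' - p' * q), (q * q'); split; first exact: mulf_neq0.
  rewrite !rmorphB !rmorphM -(subf_div _ _ (phi_neq0 q_neq0) (phi_neq0 q'_neq0)).
  rewrite -(subf_div _ _ (phi_neq0 (sigma_neq0 q_neq0)) (phi_neq0 (sigma_neq0 q'_neq0))).
  by rewrite fix_pq fix_pq'.
- move=> _ _ [p [q [q_neq0 [-> fix_pq]]]] [p' [q' [q'_neq0 [-> fix_pq']]]].
  exists (p * p'), (q * q'); split; first exact: mulf_neq0.
  rewrite !rmorphM -!mulf_div; split=> //.
  by congr (_ * _); [exact: fix_pq | exact: fix_pq'].
- move=> _ [p [q [q_neq0 [-> fix_pq]]]].
  have [->|p_neq0] := eqVneq p 0.
    by rewrite rmorph0 mul0r invr0 -(rmorph0 phi); apply: fixed_invariant_frac; apply: rmorph0.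
  exists q, p; split=> //; split; first by rewrite invf_div.
  by rewrite -fix_pq invf_div.
Qed.

(* [p / q = (p * q') / (q * q')] with [q' = sigma q * sigma^2 q], and both
   [p * q'] and [q * q'] are [sigma]-fixed. *)
Lemma invariant_frac_sub (S : F -> Prop) : subfield_closed S ->
  (forall p, sigma p = p -> S (phi p)) -> forall f, invariant_frac f -> S f.
Proof.
move=> S_closed S_fixed _ [p [q [q_neq0 [-> fix_pq]]]].
set q' := sigma q * sigma (sigma q).
have q'_neq0 : q' != 0 by rewrite mulf_neq0 ?sigma_neq0.
have cross : sigma p * q = p * sigma q.
  apply: phi_inj; rewrite !rmorphM; apply/eqP.
  by rewrite -eqr_div ?phi_neq0 ?sigma_neq0 // fix_pq.
have fixN : sigma (p * q') = p * q'.
  rewrite /q' !rmorphM sigma3; transitivity (sigma (sigma q) * (sigma p * q)); first by ring.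
  by rewrite cross; ring.
have fixD : sigma (q * q') = q * q' by rewrite /q' !rmorphM sigma3; ring.
rewrite (_ : phi p / phi q = phi (p * q') / phi (q * q')).
  by apply: subfield_div => //; apply: S_fixed.
by rewrite (rmorphM phi p) (rmorphM phi q) -mulf_div (divff (phi_neq0 q'_neq0)) mulr1.
Qed.

End InvariantFractions.

Section Z3Invariants.
Variable R : rcfType.
Local Notation C := (Cx R).
Local Notation P := (P6 R).
Local Notation L := (L6 R).
Local Notation ord6 k := (@Ordinal 6 k isT).
Local Notation K := (gen_subfield (@gensK R)).
Local Notation wL := (cstL (zeta R)).

HB.instance Definition _ := GRing.RMorphism.copy (@tofL R) (@FracField.tofrac P).
HB.instance Definition _ := GRing.RMorphism.copy (@cstL R) (@tofL R \o @mpolyC 6 C).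
HB.instance Definition _ := GRing.RMorphism.copy (@sigmaP R)
  (mmap (@mpolyC 6 C) (fun i => 'X_(sigma_idx i))).
HB.instance Definition _ g := GRing.RMorphism.copy (@evalL R g) (mmap (@cstL R) g).

Lemma ord6P (Q : 'I_6 -> Prop) :
  Q (ord6 0) -> Q (ord6 1) -> Q (ord6 2) -> Q (ord6 3) -> Q (ord6 4) -> Q (ord6 5) ->
  forall i, Q i.
Proof. by move=> ? ? ? ? ? ? [[|[|[|[|[|[|k]]]]]] hi]; rewrite ?(bool_irrelevance hi isT). Qed.

Lemma zeta_root : 1 + zeta R + zeta R ^+ 2 = 0.
Proof.
rewrite /zeta expr2 /=; apply/eqP; rewrite eq_complex /=.
have s3 : Num.sqrt (3%:R : R) ^+ 2 = 3%:R by rewrite sqr_sqrtr // ler0n.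
set s := Num.sqrt _ in s3 *.
apply/andP; split; apply/eqP; last by field.
rewrite [LHS](_ : _ = (3%:R - s ^+ 2) / 4%:R); last by field.
by rewrite s3 subrr mul0r.
Qed.

Lemma tofL_inj : injective (@tofL R).
Proof. by move=> p q /eqP; rewrite tofrac_eq => /eqP. Qed.

Lemma cstL_eq0 (c : C) : (cstL c == 0) = (c == 0).
Proof. by rewrite (raddf_eq0 _ tofL_inj) mpolyC_eq0. Qed.

Lemma natL_neq0 n : (n.+1%:R : L) != 0.
Proof. by rewrite -(rmorph_nat (@cstL R)) cstL_eq0 pnatr_eq0. Qed.

Lemma iL_neq0 : cstL (iC R) != 0.
Proof. by rewrite cstL_eq0 eq_complex /= oner_eq0 andbF. Qed.

Lemma wL_root : 1 + wL + wL ^+ 2 = 0.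
Proof.
by rewrite -(rmorphXn (@cstL R)) -(rmorph1 (@cstL R)) -!(rmorphD (@cstL R)) zeta_root rmorph0.
Qed.

Lemma gen_subfield_closed (g : 'I_6 -> L) : subfield_closed (gen_subfield g).
Proof.
have evalL1 : evalL g 1 = 1 := rmorph1 _.
split.
- by exists 1, 1; rewrite evalL1 oner_neq0 divr1.
- move=> _ _ [p [q [q_neq0 ->]]] [p' [q' [q'_neq0 ->]]].
  exists (p * q' - p' * q), (q * q'); rewrite rmorphB !(rmorphM (evalL g)).
  split; [exact: (mulf_neq0 q_neq0 q'_neq0) | exact: (subf_div _ _ q_neq0 q'_neq0)].
- move=> _ _ [p [q [q_neq0 ->]]] [p' [q' [q'_neq0 ->]]].
  exists (p * p'), (q * q'); rewrite !(rmorphM (evalL g)).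
  split; [exact: (mulf_neq0 q_neq0 q'_neq0) | exact: mulf_div].
- move=> _ [p [q [q_neq0 ->]]].
  have [p0|p_neq0] := eqVneq (evalL g p) 0.
    by exists 0, 1; rewrite rmorph0 evalL1 p0 oner_neq0 !mul0r invr0.
  by exists q, p; rewrite invf_div.
Qed.

Lemma gen_subfield_cst (g : 'I_6 -> L) c : gen_subfield g (cstL c).
Proof. by exists c%:MP, 1; rewrite rmorph1 oner_neq0 divr1 [RHS]mmapC. Qed.

Lemma gen_subfield_gen (g : 'I_6 -> L) i : gen_subfield g (g i).
Proof. by exists 'X_i, 1; rewrite rmorph1 oner_neq0 divr1 [RHS]mmapX mmap1U. Qed.

Lemma gen_subfield_min (g : 'I_6 -> L) (S : L -> Prop) : subfield_closed S ->
  (forall c, S (cstL c)) -> (forall i, S (g i)) -> forall f, gen_subfield g f -> S f.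
Proof.
move=> S_closed Scst Sg f [p [q [_ ->]]].
have Seval r : S (evalL g r).
  elim/mpoly_ring_ind: r => [c|i|r r' Sr Sr'|r r' Sr Sr'].
  - by rewrite [evalL _ _]mmapC; apply: Scst.
  - by rewrite [evalL _ _]mmapX mmap1U.
  - by rewrite (rmorphD (evalL g)); apply: subfieldD.
  - by rewrite (rmorphM (evalL g)); apply: (subfieldM S_closed).
exact: subfield_div.
Qed.

Lemma gen_subfield_sub (g h : 'I_6 -> L) :
  (forall i, gen_subfield h (g i)) -> forall f, gen_subfield g f -> gen_subfield h f.
Proof. exact: gen_subfield_min (gen_subfield_closed h) (gen_subfield_cst h). Qed.

Definition wP : P := (zeta R)%:MP.
Definition polyb (i j k : 'I_6) : P := 'X_i + wP * 'X_j + wP ^+ 2 * 'X_k.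
Definition polyc (i j k : 'I_6) : P := 'X_i + wP ^+ 2 * 'X_j + wP * 'X_k.

Lemma tofL_polyb i j k : tofL (polyb i j k) = bF (var R i) (var R j) (var R k).
Proof.
rewrite /bF (rmorphXn (@cstL R)) !(rmorphD (@tofL R)) !(rmorphM (@tofL R)).
by rewrite ?(rmorphXn (@tofL R)).
Qed.

Lemma tofL_polyc i j k : tofL (polyc i j k) = cF (var R i) (var R j) (var R k).
Proof.
rewrite /cF (rmorphXn (@cstL R)) !(rmorphD (@tofL R)) !(rmorphM (@tofL R)).
by rewrite ?(rmorphXn (@tofL R)).
Qed.

Lemma lin_var_neq0 (u v : C) (i j k : 'I_6) :
  j != i -> k != i -> 'X_i + u%:MP * 'X_j + v%:MP * 'X_k != 0 :> P.
Proof.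
move=> ji ki; apply/eqP => /(congr1 (meval (fun l => (l == i)%:R))).
rewrite !mevalD !mevalM !mevalC !mevalXU eqxx (negbTE ji) (negbTE ki) !mulr0 !addr0 ?meval0.
by move/eqP; rewrite oner_eq0.
Qed.

Lemma b1_neq0 : b1 R != 0.
Proof. by rewrite /b1 -tofL_polyb (raddf_eq0 _ tofL_inj) /polyb -rmorphXn lin_var_neq0. Qed.

Lemma c1_neq0 : c1 R != 0.
Proof. by rewrite /c1 -tofL_polyc (raddf_eq0 _ tofL_inj) /polyc -rmorphXn lin_var_neq0. Qed.

Lemma gensF_in_K i : K (gensF R i).
Proof.
have K_closed := gen_subfield_closed (gensK R).
have Ka1 : K (a1 R) := gen_subfield_gen _ (ord6 0).
have Ka2 : K (a2 R) := gen_subfield_gen _ (ord6 1).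
have Kb3 : K (b1 R ^+ 3) := gen_subfield_gen _ (ord6 2).
have Kbc : K (b1 R * c1 R) := gen_subfield_gen _ (ord6 3).
have Kb1c2 : K (b1 R * c2 R) := gen_subfield_gen _ (ord6 4).
have Kc1b2 : K (c1 R * b2 R) := gen_subfield_gen _ (ord6 5).
have Ki : K (cstL (iC R)) := gen_subfield_cst _ _.
have K2i : K (cstL (2%:R * iC R)) := gen_subfield_cst _ _.
elim/ord6P: i; rewrite /gensF /= /F2 /F3 /G1 /G2 -/(b1 R) -/(c1 R)
  ?(sqr_divl_cube b1_neq0 c1_neq0) ?(sqr_divr_cube (c1 R) b1_neq0) //;
  by subfield_closure K_closed.
Qed.

Lemma gensK_in_F i : gen_subfield (gensF R) (gensK R i).
Proof.
set S := gen_subfield (gensF R).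
have S_closed : subfield_closed S := gen_subfield_closed _.
have two_neq0 : (2%:R : L) != 0 := natL_neq0 1.
have two_i_neq0 : cstL (2%:R * iC R) != 0.
  by rewrite (rmorphM (@cstL R)) (rmorph_nat (@cstL R)); exact: (mulf_neq0 two_neq0 iL_neq0).
have Sa1 : S (a1 R) := gen_subfield_gen _ (ord6 0).
have Sa2 : S (a2 R) := gen_subfield_gen _ (ord6 3).
have SF2 : S (b1 R ^+ 2 / c1 R + c1 R ^+ 2 / b1 R) := gen_subfield_gen _ (ord6 1).
have SF3 : S ((b1 R ^+ 2 / c1 R - c1 R ^+ 2 / b1 R) / cstL (iC R)).
  by rewrite [_ / cstL _]mulrC; exact: (gen_subfield_gen _ (ord6 2)).
have SG1 : S (b1 R * c2 R + c1 R * b2 R).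
  rewrite -(divfK two_neq0 (b1 R * c2 R + c1 R * b2 R)).
  exact: (subfieldM S_closed (gen_subfield_gen _ (ord6 4)) (subfield_nat S_closed 2)).
have SG2 : S ((b1 R * c2 R - c1 R * b2 R) / cstL (2%:R * iC R)) := gen_subfield_gen _ (ord6 5).
have [Su Sv] := subfield_sum_diff S_closed two_neq0 iL_neq0 SF2 SF3 (gen_subfield_cst _ _).
have [Sb1c2 Sc1b2] := subfield_sum_diff S_closed two_neq0 two_i_neq0 SG1 SG2 (gen_subfield_cst _ _).
elim/ord6P: i; rewrite /gensK /= ?(cube_sqr_div b1_neq0 c1_neq0) ?(mul_sqr_div b1_neq0 c1_neq0) //;
  by subfield_closure S_closed.
Qed.

Lemma sigmaPX i : sigmaP 'X_i = 'X_(sigma_idx i) :> P.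
Proof. by rewrite [LHS]mmapX mmap1U. Qed.

Lemma sigmaPC c : sigmaP c%:MP = c%:MP :> P.
Proof. exact: mmapC. Qed.

Lemma sigma_idx3 i : sigma_idx (sigma_idx (sigma_idx i)) = i.
Proof. by elim/ord6P: i. Qed.

Lemma sigmaP3 p : sigmaP (sigmaP (sigmaP p)) = p :> P.
Proof.
apply: (mpoly_rmorph_ext (f := @sigmaP R \o @sigmaP R \o @sigmaP R) (g := idfun)) => [c|i] /=.
  by rewrite !sigmaPC.
by rewrite !sigmaPX sigma_idx3.
Qed.

Lemma wP3 : wP ^+ 3 = 1.
Proof. by rewrite /wP -(rmorphXn (@mpolyC 6 C)) (cube_eq1 zeta_root) rmorph1. Qed.

Lemma sigma_wP : sigmaP wP = wP.
Proof. exact: sigmaPC. Qed.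

Lemma sigma_polyb i j k : sigma_idx i = j -> sigma_idx j = k -> sigma_idx k = i ->
  sigmaP (polyb i j k) = wP ^+ 2 * polyb i j k.
Proof.
move=> ij jk ki; rewrite /polyb !(rmorphD (@sigmaP R)) !(rmorphM (@sigmaP R)) /=.
by rewrite !sigma_wP -expr2 !sigmaPX ij jk ki (rot_dft_b _ _ _ wP3).
Qed.

Lemma sigma_polyc i j k : sigma_idx i = j -> sigma_idx j = k -> sigma_idx k = i ->
  sigmaP (polyc i j k) = wP * polyc i j k.
Proof.
move=> ij jk ki; rewrite /polyc !(rmorphD (@sigmaP R)) !(rmorphM (@sigmaP R)) /=.
by rewrite !sigma_wP -expr2 !sigmaPX ij jk ki (rot_dft_c _ _ _ wP3).
Qed.

Lemma gensK_invariant i : @z3_invariant R (gensK R i).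
Proof.
have fixed := @fixed_invariant_frac _ _ (@tofL R) (@sigmaP R).
have b012 : sigmaP (polyb (ord6 0) (ord6 1) (ord6 2)) = wP ^+ 2 * polyb (ord6 0) (ord6 1) (ord6 2).
  exact: sigma_polyb.
have b345 : sigmaP (polyb (ord6 3) (ord6 4) (ord6 5)) = wP ^+ 2 * polyb (ord6 3) (ord6 4) (ord6 5).
  exact: sigma_polyb.
have c012 : sigmaP (polyc (ord6 0) (ord6 1) (ord6 2)) = wP * polyc (ord6 0) (ord6 1) (ord6 2).
  exact: sigma_polyc.
have c345 : sigmaP (polyc (ord6 3) (ord6 4) (ord6 5)) = wP * polyc (ord6 3) (ord6 4) (ord6 5).
  exact: sigma_polyc.
elim/ord6P: i; rewrite /gensK /=.
- rewrite /a1 /aF -!(rmorphD (@tofL R)); apply: fixed.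
  by rewrite !(rmorphD (@sigmaP R)) /= !sigmaPX /= addrC addrA.
- rewrite /a2 /aF -!(rmorphD (@tofL R)); apply: fixed.
  by rewrite !(rmorphD (@sigmaP R)) /= !sigmaPX /= addrC addrA.
- rewrite /b1 -tofL_polyb -(rmorphXn (@tofL R)); apply: fixed.
  by rewrite (rmorphXn (@sigmaP R)) /= b012 (unity3_sqr_expr3 _ wP3).
- rewrite /b1 /c1 -tofL_polyb -tofL_polyc -(rmorphM (@tofL R)); apply: fixed.
  by rewrite (rmorphM (@sigmaP R)) /= b012 c012 (unity3_mul_sqr_l _ _ wP3).
- rewrite /b1 /c2 -tofL_polyb -tofL_polyc -(rmorphM (@tofL R)); apply: fixed.
  by rewrite (rmorphM (@sigmaP R)) /= b012 c345 (unity3_mul_sqr_l _ _ wP3).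
- rewrite /c1 /b2 -tofL_polyb -tofL_polyc -(rmorphM (@tofL R)); apply: fixed.
  by rewrite (rmorphM (@sigmaP R)) /= b345 c012 (unity3_mul_sqr_r _ _ wP3).
Qed.

Lemma cst_invariant c : @z3_invariant R (cstL c).
Proof. exact: fixed_invariant_frac (sigmaPC c). Qed.

Local Notation triple := (twisted_triple K wL (b1 R) (c1 R)).

Lemma triple_x1 : triple (x1 R) (y1 R) (z1 R).
Proof.
have K_closed := gen_subfield_closed (gensK R).
have eb : b1 R = x1 R + wL * y1 R + wL ^+ 2 * z1 R by rewrite /b1 /bF (rmorphXn (@cstL R)).
have ec : c1 R = x1 R + wL ^+ 2 * y1 R + wL * z1 R by rewrite /c1 /cF (rmorphXn (@cstL R)).
apply: (triple_dft K_closed wL_root b1_neq0 c1_neq0 (natL_neq0 2)).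
- exact: (gen_subfield_gen _ (ord6 0)).
- by rewrite -eb (divff b1_neq0); apply: (subfield1 K_closed).
- by rewrite -ec (divff c1_neq0); apply: (subfield1 K_closed).
Qed.

(* [b_2 = (c_1 b_2 / (b_1 c_1)) b_1] and [c_2 = (b_1 c_2 / (b_1 c_1)) c_1]. *)
Lemma triple_x2 : triple (x2 R) (y2 R) (z2 R).
Proof.
have K_closed := gen_subfield_closed (gensK R).
have Kbc : K (b1 R * c1 R) := gen_subfield_gen _ (ord6 3).
have eb : b2 R = x2 R + wL * y2 R + wL ^+ 2 * z2 R by rewrite /b2 /bF (rmorphXn (@cstL R)).
have ec : c2 R = x2 R + wL ^+ 2 * y2 R + wL * z2 R by rewrite /c2 /cF (rmorphXn (@cstL R)).
apply: (triple_dft K_closed wL_root b1_neq0 c1_neq0 (natL_neq0 2)).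
- exact: (gen_subfield_gen _ (ord6 1)).
- rewrite -eb -[b2 R / b1 R]mul1r -(divff c1_neq0) mulf_div [c1 R * b1 R]mulrC.
  by apply: subfield_div => //; apply: (gen_subfield_gen _ (ord6 5)).
- rewrite -ec -[c2 R / c1 R]mul1r -(divff b1_neq0) mulf_div.
  by apply: subfield_div => //; apply: (gen_subfield_gen _ (ord6 4)).
Qed.

Lemma triple_cycle x y z : triple x y z -> triple y z x.
Proof.
move=> t; have Kw : K wL := gen_subfield_cst _ (zeta R).
exact: (triple_rot (gen_subfield_closed _) Kw wL_root t).
Qed.

Lemma triple_poly p : triple (tofL p) (tofL (sigmaP p)) (tofL (sigmaP (sigmaP p))).
Proof.
have K_closed := gen_subfield_closed (gensK R).
apply: (triple_rmorph K_closed wL_root b1_neq0 c1_neq0 (gen_subfield_gen _ (ord6 2))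
   (gen_subfield_gen _ (ord6 3)) (f0 := @tofL R) (f1 := @tofL R \o @sigmaP R)
   (f2 := @tofL R \o @sigmaP R \o @sigmaP R)) => [a|i] /=.
  by rewrite !sigmaPC; apply: triple_cst (gen_subfield_cst _ _).
elim/ord6P: i; rewrite !sigmaPX /=.
- exact: triple_x1.
- exact: triple_cycle triple_x1.
- exact: triple_cycle (triple_cycle triple_x1).
- exact: triple_x2.
- exact: triple_cycle triple_x2.
- exact: triple_cycle (triple_cycle triple_x2).
Qed.

Lemma fixed_poly_in_K p : sigmaP p = p -> K (tofL p).
Proof.
move=> fix_p; have := triple_poly p; rewrite !fix_p => t.
exact: (triple_fixed wL_root (natL_neq0 2) t).
Qed.

End Z3Invariants.

Theorem mainTheorem7 (R : rcfType) :
  (forall f : L6 R, gen_subfield (@gensF R) f <-> gen_subfield (@gensK R) f) /\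
  (forall f : L6 R, gen_subfield (@gensK R) f <-> @z3_invariant R f).
Proof.
have tofL_inj := @tofL_inj R; have sigmaP3 := @sigmaP3 R.
split=> f; split.
- exact: gen_subfield_sub (@gensF_in_K R) f.
- exact: gen_subfield_sub (@gensK_in_F R) f.
- apply: (gen_subfield_min (invariant_frac_closed tofL_inj sigmaP3) (@cst_invariant R)).
  exact: gensK_invariant.
- apply: (invariant_frac_sub tofL_inj sigmaP3 (gen_subfield_closed _)).
  exact: fixed_poly_in_K.
Qed.
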